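(* Let $<$ be the usual strict order on $\mathbb{N}$, viewed as the relation $R$ with $R\,y\,x$ iff $y<x$. (1) If $R$ satisfies $\mathbf{WFmin}$, then every predicate $P$ on $\mathbb{N}$ is decidable: $P(n)\lor\lnot P(n)$ for all $n$. (2) If $R$ satisfies $\mathbf{WFminDNE}$, then every predicate $P$ on $\mathbb{N}$ is weakly decidable: $\lnot\lnot P(n)\lor\lnot P(n)$ for all $n$.
   Context: Work in constructive (intuitionistic) logic / Martin-Löf type theory without excluded middle or other axioms. For a relation $R$ on $A$ and a predicate $P\subseteq A$: $x$ is $P$-minimal if $x\in P$ and for all $y$, $R\,y\,x$ implies $y\notin P$. $P$ is $\lnot\lnot$-closed if $\lnot\lnot(x\in P)$ implies $x\in P$ for all $x$. $P$ is nonempty (inhabited) if there is $x\in P$. $\mathbf{WFmin}$: every nonempty $P\subseteq A$ has a $P$-minimal element. $\mathbf{WFminDNE}$: every nonempty $\lnot\lnot$-closed $P\subseteq A$ has a $P$-minimal element. *)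

From Stdlib Require Import Arith.

Definition minimal {A : Type} (R : A -> A -> Prop) (P : A -> Prop) (x : A) : Prop :=
  P x /\ (forall y, R y x -> ~ P y).

Definition notnot_closed {A : Type} (P : A -> Prop) : Prop :=
  forall x, ~ ~ P x -> P x.

Definition nonempty {A : Type} (P : A -> Prop) : Prop := exists x, P x.

Definition WFmin {A : Type} (R : A -> A -> Prop) : Prop :=
  forall P : A -> Prop, nonempty P -> exists x, minimal R P x.

Definition WFminDNE {A : Type} (R : A -> A -> Prop) : Prop :=
  forall P : A -> Prop, notnot_closed P -> nonempty P -> exists x, minimal R P x.

Definition ltR : nat -> nat -> Prop := fun y x => y < x.

(* Given a proposition Q, apply minimality to the predicate {0 if Q} ∪ {1}.
   Its least element is 0 exactly when Q holds, so it decides Q.  When Q is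
   replaced by ~~Q the predicate is ~~-closed, so WFminDNE already yields the
   weak decision of Q. *)

From Stdlib Require Import Arith.

Section TwoPointPredicate.

Context {A : Type} (R : A -> A -> Prop) (a b : A).
Hypothesis R_ab : R a b.

Definition two_point (Q : Prop) (k : A) : Prop := (k = a /\ Q) \/ k = b.

Lemma two_point_nonempty (Q : Prop) : nonempty (two_point Q).
Proof. exists b; right; reflexivity. Qed.

Lemma minimal_two_point_dec (Q : Prop) x :
  minimal R (two_point Q) x -> Q \/ ~ Q.
Proof.
  intros [[[_ HQ] | ->] Hmin].
  - left; exact HQ.
  - right; intro HQ; apply (Hmin a R_ab); left; split; [reflexivity | exact HQ].
Qed.

Hypothesis eq_dec : forall x y : A, x = y \/ x <> y.

Lemma two_point_notnot_closed (Q : Prop) :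
  (~ ~ Q -> Q) -> notnot_closed (two_point Q).
Proof.
  intros HQ k Hk.
  destruct (eq_dec k b) as [-> | Hkb]; [right; reflexivity |].
  left.
  destruct (eq_dec k a) as [-> | Hka].
  - split; [reflexivity |].
    apply HQ; intro HnQ; apply Hk; intros [[_ HQ'] | Hb]; [exact (HnQ HQ') | exact (Hkb Hb)].
  - exfalso; apply Hk; intros [[Ha _] | Hb]; [exact (Hka Ha) | exact (Hkb Hb)].
Qed.

End TwoPointPredicate.

Arguments two_point_nonempty {A} a b Q.
Arguments minimal_two_point_dec {A R a b} R_ab {Q x}.
Arguments two_point_notnot_closed {A} a b eq_dec Q.

Lemma WFmin_excluded_middle {A} {R : A -> A -> Prop} {a b} :
  R a b -> WFmin R -> forall Q : Prop, Q \/ ~ Q.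
Proof.
  intros R_ab HWF Q.
  destruct (HWF _ (two_point_nonempty a b Q)) as [x Hx].
  exact (minimal_two_point_dec R_ab Hx).
Qed.

Lemma WFminDNE_weak_excluded_middle {A} {R : A -> A -> Prop} {a b} :
  (forall x y : A, x = y \/ x <> y) -> R a b -> WFminDNE R ->
  forall Q : Prop, ~ ~ Q \/ ~ Q.
Proof.
  intros eq_dec R_ab HWF Q.
  assert (Hclosed : notnot_closed (two_point a b (~ ~ Q))).
  { apply two_point_notnot_closed; [exact eq_dec |].
    intros HQ HnQ; exact (HQ (fun H => H HnQ)). }
  destruct (HWF _ Hclosed (two_point_nonempty a b _)) as [x Hx].
  destruct (minimal_two_point_dec R_ab Hx) as [HnnQ | HnnnQ].
  - left; exact HnnQ.
  - right; intro HQ; exact (HnnnQ (fun HnQ => HnQ HQ)).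
Qed.

Theorem mainTheorem13 :
  (WFmin ltR -> forall (P : nat -> Prop) (n : nat), P n \/ ~ P n) /\
  (WFminDNE ltR -> forall (P : nat -> Prop) (n : nat), ~ ~ P n \/ ~ P n).
Proof.
  assert (lt_0_1 : ltR 0 1) by (unfold ltR; auto).
  split.
  - intros HWF P n; exact (WFmin_excluded_middle lt_0_1 HWF (P n)).
  - intros HWF P n;
      exact (WFminDNE_weak_excluded_middle Nat.eq_decidable lt_0_1 HWF (P n)).
Qed.
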